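(* Let $F:\mathbb{R}^d\to\mathbb{R}^d$ be $L$-Lipschitz, $G:\mathbb{R}^d\rightrightarrows\mathbb{R}^d$ maximally monotone, the solution set of $0\in F(x)+G(x)$ nonempty, and $F+G$ maximally $\rho$-cohypomonotone with $\rho>0$. Let $\eta>\rho$, $\alpha=1-\frac\rho\eta$, $\beta_k=\frac1{k+2}$, $x_0\in\mathbb{R}^d$, and let $x^\star$ be a solution. Suppose the sequence $(x_k)$ satisfies $x_{k+1}=\beta_kx_0+(1-\beta_k)\big((1-\alpha)x_k+\alpha\widetilde J_k\big)$ for $k\ge0$, where the points $\widetilde J_k\in\mathbb{R}^d$ satisfy $\|J_{\eta(F+G)}(x_k)-\widetilde J_k\|\le\varepsilon_k$ for some $\varepsilon_k>0$. Let $R=\mathrm{Id}-J_{\eta(F+G)}$. Then for any $K\ge1$, $$\frac{K(K+1)}{4}\|R(x_K)\|^2-\frac{K+1}{K\alpha^2}\|x^\star-x_0\|^2\le\sum_{k=0}^{K-1}\left(\frac{(k+1)(k+2)\varepsilon_k^2}{2}+(k+1)\|R(x_k)\|\varepsilon_k\right),$$ and $\|x_k-x^\star\|\le\|x_0-x^\star\|+\frac{\alpha}{k+1}\sum_{i=0}^{k-1}(i+1)\varepsilon_i$.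
   Context: For an operator $A$, $J_A=(\mathrm{Id}+A)^{-1}$ is its resolvent. $F+G$ is $\rho$-cohypomonotone if $\langle u-v,x-y\rangle\ge-\rho\|u-v\|^2$ for all $(x,u),(y,v)$ in its graph; maximal means its graph is not strictly contained in the graph of another $\rho$-cohypomonotone operator. *)

From HB Require Import structures.
From mathcomp Require Import all_boot all_order all_algebra.
From mathcomp Require Import reals.
From Stdlib Require Import ClassicalEpsilon.
Set Implicit Arguments. Unset Strict Implicit. Unset Printing Implicit Defensive.
Import Order.TTheory GRing.Theory Num.Theory.
Local Open Scope ring_scope.

Section Defs.
Variables (R : realType) (d : nat).
Notation vec := 'rV[R]_d.

Definition dotp (u v : vec) : R := \sum_(i < d) u ord0 i * v ord0 i.
Definition enorm (u : vec) : R := Num.sqrt (dotp u u).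

(* set-valued operators R^d ⇉ R^d, given by their graphs: A x u <-> u ∈ A(x) *)
Definition op := vec -> vec -> Prop.

Definition op_of_fun (F : vec -> vec) : op := fun x u => u = F x.

Definition op_add (F : vec -> vec) (G : op) : op :=
  fun x u => exists g, G x g /\ u = F x + g.

Definition lipschitz (L : R) (F : vec -> vec) : Prop :=
  forall x y, enorm (F x - F y) <= L * enorm (x - y).

Definition monotone_op (A : op) : Prop :=
  forall x y u v, A x u -> A y v -> 0 <= dotp (u - v) (x - y).

Definition maximally_monotone (A : op) : Prop :=
  monotone_op A /\
  forall B : op, monotone_op B -> (forall x u, A x u -> B x u) ->
    (forall x u, B x u -> A x u).

Definition cohypomonotone (rho : R) (A : op) : Prop :=
  forall x y u v, A x u -> A y v ->
    - rho * dotp (u - v) (u - v) <= dotp (u - v) (x - y).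

Definition maximally_cohypomonotone (rho : R) (A : op) : Prop :=
  cohypomonotone rho A /\
  forall B : op, cohypomonotone rho B -> (forall x u, A x u -> B x u) ->
    (forall x u, B x u -> A x u).

(* graph of the resolvent J_{eta A} = (Id + eta A)^{-1} *)
Definition resolvent_rel (eta : R) (A : op) : op :=
  fun x y => exists u, A y u /\ x = y + eta *: u.

(* the resolvent as a point: the (chosen) element of J_{eta A}(x);
   under the hypotheses of the theorem J_{eta A} is single-valued with
   full domain, so this is exactly J_{eta A}(x). *)
Definition resolvent (eta : R) (A : op) (x : vec) : vec :=
  epsilon (inhabits x) (fun y => resolvent_rel eta A x y).

End Defs.

From HB Require Import structures.
From mathcomp Require Import all_boot all_order all_algebra.
From mathcomp Require Import reals classical_sets.
From mathcomp Require Import ring lra.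
From Stdlib Require Import ClassicalEpsilon.
Import Order.TTheory GRing.Theory Num.Theory.
Set Implicit Arguments. Unset Strict Implicit. Unset Printing Implicit Defensive.
Local Open Scope ring_scope.

(* Put c := eta - rho.  For a maximally rho-cohypomonotone A, the operator
   u |-> (A^-1 + rho Id)(u) / c is maximally monotone, and Minty's theorem for
   it says that every x splits as x = y + eta u with u in A y: the resolvent
   J of eta A has full domain, and its residual R = Id - J satisfies
   alpha |R x - R x'|^2 <= <R x - R x', x - x'> and R x* = 0.  Hence S = alpha R
   is firmly nonexpansive with S x* = 0, and the iteration is Halpern's
   iteration (k + 2) x_(k+1) = x_0 + (k + 1) (x_k - S x_k + e_k) with errors
   e_k = alpha (Jt_k - J x_k).  The potential
   V_k = k (k + 1) / 2 |S x_k|^2 + (k + 1) <S x_k, x_k - x_0> increases by at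
   most the error terms at each step, while firmness at x* bounds V_K below by
   K (K + 1) / 4 |S x_K|^2 - (K + 1) / K |x* - x_0|^2.  The distance estimate
   holds because Id - S does not increase the distance to x*.

   Minty's theorem (z = y + v with v in B y, for B maximally monotone on R^d)
   is proved without compactness.  On finitely supported probability measures
   s on the graph of B let m(s) = (z - mean b + mean a) / 2 and
   psi(s) = <z, mean a> - mean <a, b> - |m(s)|^2.  Monotonicity makes psi <= 0,
   and psi is strongly concave along mixtures, so the m(s) of near-maximisers
   of psi converge to a point y.  Mixing a near-maximiser with a small mass at
   (a, b) shows <z - y - b, y - a> >= 0, and maximality puts (y, z - y) in the
   graph of B. *)

Section InnerProduct.
Variables (R : realType) (d : nat).
Implicit Types (a : R) (u v w : 'rV[R]_d).

Lemma dotpC u v : dotp u v = dotp v u.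
Proof. by apply: eq_bigr => i _; rewrite mulrC. Qed.

Lemma dotpDl u v w : dotp (u + v) w = dotp u w + dotp v w.
Proof. by rewrite /dotp -big_split; apply: eq_bigr => i _; rewrite !mxE mulrDl. Qed.

Lemma dotpDr u v w : dotp w (u + v) = dotp w u + dotp w v.
Proof. by rewrite dotpC dotpDl !(dotpC w). Qed.

Lemma dotpZl a u v : dotp (a *: u) v = a * dotp u v.
Proof. by rewrite /dotp mulr_sumr; apply: eq_bigr => i _; rewrite !mxE mulrA. Qed.

Lemma dotpZr a u v : dotp v (a *: u) = a * dotp v u.
Proof. by rewrite dotpC dotpZl dotpC. Qed.

Lemma dotpNl u v : dotp (- u) v = - dotp u v.
Proof. by rewrite -scaleN1r dotpZl mulN1r. Qed.

Lemma dotpNr u v : dotp v (- u) = - dotp v u.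
Proof. by rewrite dotpC dotpNl dotpC. Qed.

Lemma dotp0l u : dotp 0 u = 0.
Proof. by rewrite -(scale0r 0) dotpZl mul0r. Qed.

Lemma dotp0r u : dotp u 0 = 0.
Proof. by rewrite dotpC dotp0l. Qed.

Lemma dotpp_ge0 u : 0 <= dotp u u.
Proof. by apply: sumr_ge0 => i _; rewrite -expr2 sqr_ge0. Qed.

Lemma dotpp_eq0 u : dotp u u = 0 -> u = 0.
Proof.
move=> /eqP; rewrite psumr_eq0 => [/allP u0|i _]; last by rewrite -expr2 sqr_ge0.
apply/rowP => i; rewrite mxE.
by have := u0 i (mem_index_enum i); rewrite mulf_eq0 orbb => /eqP.
Qed.

Lemma coordB u v (i : 'I_d) : (u - v) ord0 i = u ord0 i - v ord0 i.
Proof. by rewrite !mxE. Qed.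

Lemma sqr_coord_le_dotpp u (i : 'I_d) : u ord0 i ^+ 2 <= dotp u u.
Proof.
rewrite /dotp (bigD1 i) //= expr2 lerDl sumr_ge0 // => j _.
by rewrite -expr2 sqr_ge0.
Qed.

Lemma enorm_sqr u : enorm u ^+ 2 = dotp u u.
Proof. by rewrite sqr_sqrtr // dotpp_ge0. Qed.

Lemma enorm_ge0 u : 0 <= enorm u.
Proof. exact: sqrtr_ge0. Qed.

Lemma enormN u : enorm (- u) = enorm u.
Proof. by rewrite /enorm dotpNl dotpNr opprK. Qed.

Lemma enormZ a u : enorm (a *: u) = `|a| * enorm u.
Proof.
by rewrite /enorm dotpZl dotpZr mulrA -expr2 sqrtrM ?sqr_ge0 // sqrtr_sqr.
Qed.

Lemma ler_enorm u v : dotp u u <= dotp v v -> enorm u <= enorm v.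
Proof. exact: ler_wsqrtr. Qed.

Lemma cauchy_schwarz_sqr u v : dotp u v ^+ 2 <= dotp u u * dotp v v.
Proof.
have [/dotpp_eq0 ->|vv_neq0] := eqVneq (dotp v v) 0.
  by rewrite dotp0r dotp0l expr0n mulr0.
have vv_gt0 : 0 < dotp v v by rewrite lt_def vv_neq0 dotpp_ge0.
have := dotpp_ge0 (dotp v v *: u - dotp u v *: v).
rewrite !(dotpDl, dotpDr, dotpNl, dotpNr, dotpZl, dotpZr) (dotpC v u) => ge0.
have : 0 <= dotp v v * (dotp u u * dotp v v - dotp u v ^+ 2) by lra.
by rewrite pmulr_rge0 // subr_ge0.
Qed.

Lemma cauchy_schwarz u v : dotp u v <= enorm u * enorm v.
Proof.
rewrite -sqrtrM ?dotpp_ge0 // (le_trans (ler_norm _)) // -sqrtr_sqr.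
exact/ler_wsqrtr/cauchy_schwarz_sqr.
Qed.

Lemma ler_enormD u v : enorm (u + v) <= enorm u + enorm v.
Proof.
rewrite -[leRHS]ger0_norm ?addr_ge0 ?enorm_ge0 // -sqrtr_sqr.
apply: ler_wsqrtr; rewrite sqrrD !enorm_sqr !(dotpDl, dotpDr) (dotpC v u).
have := cauchy_schwarz u v; lra.
Qed.

End InnerProduct.

Ltac dotp_simpl :=
  rewrite ?(dotpDl, dotpDr, dotpNl, dotpNr, dotpZl, dotpZr, dotp0l, dotp0r).

Section Distributions.
Variables (R : realType) (d : nat).
Notation vec := 'rV[R]_d.
Notation distr := (seq (R * (vec * vec))).
Implicit Types (t : R) (a b u v : vec) (s : distr) (B : op R d).

Definition weight s : R := \sum_(p <- s) p.1.
Definition mean1 s : vec := \sum_(p <- s) p.1 *: p.2.1.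
Definition mean2 s : vec := \sum_(p <- s) p.1 *: p.2.2.
Definition mean_dotp s : R := \sum_(p <- s) p.1 * dotp p.2.1 p.2.2.

Definition mix t s1 s2 : distr :=
  [seq ((1 - t) * p.1, p.2) | p <- s1] ++ [seq (t * p.1, p.2) | p <- s2].

Definition dirac a b : distr := [:: (1, (a, b))].

Definition graph_distr B s :=
  (forall p, p \in s -> 0 <= p.1 /\ B p.2.1 p.2.2) /\ weight s = 1.

Lemma weight_mix t s1 s2 : weight (mix t s1 s2) = (1 - t) * weight s1 + t * weight s2.
Proof. by rewrite /weight big_cat !big_map !mulr_sumr. Qed.

Lemma mean1_mix t s1 s2 : mean1 (mix t s1 s2) = (1 - t) *: mean1 s1 + t *: mean1 s2.
Proof.
by rewrite /mean1 big_cat !big_map !scaler_sumr; congr (_ + _);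
  apply: eq_bigr => p _; rewrite scalerA.
Qed.

Lemma mean2_mix t s1 s2 : mean2 (mix t s1 s2) = (1 - t) *: mean2 s1 + t *: mean2 s2.
Proof.
by rewrite /mean2 big_cat !big_map !scaler_sumr; congr (_ + _);
  apply: eq_bigr => p _; rewrite scalerA.
Qed.

Lemma mean_dotp_mix t s1 s2 :
  mean_dotp (mix t s1 s2) = (1 - t) * mean_dotp s1 + t * mean_dotp s2.
Proof.
by rewrite /mean_dotp big_cat !big_map !mulr_sumr; congr (_ + _);
  apply: eq_bigr => p _; rewrite mulrA.
Qed.

Lemma mean1_dirac a b : mean1 (dirac a b) = a.
Proof. by rewrite /mean1 big_seq1 scale1r. Qed.

Lemma mean2_dirac a b : mean2 (dirac a b) = b.
Proof. by rewrite /mean2 big_seq1 scale1r. Qed.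

Lemma mean_dotp_dirac a b : mean_dotp (dirac a b) = dotp a b.
Proof. by rewrite /mean_dotp big_seq1 mul1r. Qed.

Lemma graph_distr_dirac B a b : B a b -> graph_distr B (dirac a b).
Proof.
move=> Bab; split=> [p|]; last by rewrite /weight big_seq1.
by rewrite inE => /eqP ->.
Qed.

Lemma graph_distr_mix B t s1 s2 : 0 <= t <= 1 ->
  graph_distr B s1 -> graph_distr B s2 -> graph_distr B (mix t s1 s2).
Proof.
move=> /andP[t_ge0 t_le1] [s1B w1] [s2B w2].
split=> [p|]; last by rewrite weight_mix w1 w2; lra.
rewrite mem_cat => /orP[] /mapP[q qs ->] /=.
  by have [q_ge0 Bq] := s1B q qs; split=> //; rewrite mulr_ge0 // subr_ge0.
by have [q_ge0 Bq] := s2B q qs; split=> //; rewrite mulr_ge0.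
Qed.

Lemma sum_dotp_shift u v s :
  \sum_(q <- s) q.1 * dotp (u - q.2.1) (v - q.2.2)
  = weight s * dotp u v - dotp u (mean2 s) - dotp (mean1 s) v + mean_dotp s.
Proof.
rewrite /weight /mean1 /mean2 /mean_dotp.
by elim: s => [|q s IH]; [rewrite !big_nil | rewrite !big_cons IH]; dotp_simpl; lra.
Qed.

Lemma sum_dotp_affine (c k : R) u v s :
  \sum_(p <- s) p.1 * (c * dotp p.2.1 p.2.2 - dotp p.2.1 v - dotp u p.2.2 + k)
  = c * mean_dotp s - dotp (mean1 s) v - dotp u (mean2 s) + k * weight s.
Proof.
rewrite /weight /mean1 /mean2 /mean_dotp.
by elim: s => [|q s IH]; [rewrite !big_nil | rewrite !big_cons IH]; dotp_simpl; lra.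
Qed.

(* Expand 0 <= sum_p w_p sum_q w_q <a_p - a_q, b_p - b_q>. *)
Lemma mean_dotp_ge B s : monotone_op B -> graph_distr B s ->
  dotp (mean1 s) (mean2 s) <= mean_dotp s.
Proof.
move=> Bmono [sB w1].
have : 0 <= \sum_(p <- s) p.1 *
             \sum_(q <- s) q.1 * dotp (p.2.1 - q.2.1) (p.2.2 - q.2.2).
  rewrite big_seq sumr_ge0 // => p ps; have [p_ge0 Bp] := sB p ps.
  rewrite mulr_ge0 // big_seq sumr_ge0 // => q qs; have [q_ge0 Bq] := sB q qs.
  by rewrite mulr_ge0 // dotpC; apply: Bmono.
under eq_bigr do rewrite sum_dotp_shift.
by rewrite sum_dotp_affine w1; lra.
Qed.

Variable z : vec.

Definition center s : vec := 2^-1 *: (z - mean2 s + mean1 s).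
Definition psi s : R := dotp z (mean1 s) - mean_dotp s - dotp (center s) (center s).

Lemma center_dirac a b : center (dirac a b) = 2^-1 *: (z - b + a).
Proof. by rewrite /center mean1_dirac mean2_dirac. Qed.

Lemma psi_le0 B s : monotone_op B -> graph_distr B s -> psi s <= 0.
Proof.
move=> Bmono sB; have := mean_dotp_ge Bmono sB.
have := dotpp_ge0 (z - mean2 s - mean1 s).
rewrite /psi /center; dotp_simpl.
rewrite !(dotpC (mean2 s) z) !(dotpC (mean1 s) z) !(dotpC (mean1 s) (mean2 s)).
lra.
Qed.

Lemma psi_mix t s1 s2 :
  psi (mix t s1 s2) = (1 - t) * psi s1 + t * psi s2
    + t * (1 - t) * dotp (center s1 - center s2) (center s1 - center s2).
Proof.
have center_mix : center (mix t s1 s2) = (1 - t) *: center s1 + t *: center s2.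
  by rewrite /center mean1_mix mean2_mix; apply/rowP => i; rewrite !mxE; ring.
by rewrite /psi center_mix mean1_mix mean_dotp_mix; dotp_simpl; ring.
Qed.

Lemma psi_dirac y a b : psi (dirac a b) =
  - dotp (z - y - b) (y - a) - dotp (y - center (dirac a b)) (y - center (dirac a b)).
Proof.
rewrite /psi center_dirac mean1_dirac mean_dotp_dirac; dotp_simpl.
rewrite !(dotpC z y) !(dotpC b y) !(dotpC a y) !(dotpC b a) !(dotpC a z) !(dotpC b z).
lra.
Qed.

End Distributions.

Section MintyPoint.
Variables (R : realType) (d : nat).
Notation vec := 'rV[R]_d.
Notation distr := (seq (R * (vec * vec))).
Variables (B : op R d) (p0 q0 z : vec).
Hypotheses (Bmono : monotone_op B) (Bp0 : B p0 q0).
Implicit Types (s : distr) (a b : vec).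

Local Open Scope classical_set_scope.

Definition psi_sup : R := sup (psi z @` graph_distr B).

Lemma has_sup_psi : has_sup (psi z @` graph_distr B).
Proof.
split; first by exists (psi z (dirac p0 q0)), (dirac p0 q0); first exact: graph_distr_dirac.
by exists 0 => _ [s sB <-]; exact: psi_le0 Bmono sB.
Qed.

Lemma psi_le_sup s : graph_distr B s -> psi z s <= psi_sup.
Proof. by move=> sB; apply: sup_upper_bound; [exact: has_sup_psi | exists s]. Qed.

Lemma psi_sup_le0 : psi_sup <= 0.
Proof.
apply: ge_sup; first by case: has_sup_psi.
by move=> _ [s sB <-]; exact: psi_le0 Bmono sB.
Qed.

Definition gap s : R := psi_sup - psi z s.

Lemma gap_ge0 s : graph_distr B s -> 0 <= gap s.
Proof. by move=> sB; rewrite subr_ge0 psi_le_sup. Qed.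

Lemma gap_small e : 0 < e -> exists2 s, graph_distr B s & gap s < e.
Proof.
move=> e_gt0; have [_ [s sB <-] near] := sup_adherent e_gt0 has_sup_psi.
by exists s => //; rewrite /gap /psi_sup; lra.
Qed.

Lemma center_dist s1 s2 : graph_distr B s1 -> graph_distr B s2 ->
  dotp (center z s1 - center z s2) (center z s1 - center z s2)
  <= 2 * (gap s1 + gap s2).
Proof.
move=> s1B s2B; have half : 0 <= (2^-1 : R) <= 1 by apply/andP; split; lra.
have := psi_le_sup (graph_distr_mix half s1B s2B).
by rewrite psi_mix /gap; lra.
Qed.

Definition radius s : R := Num.sqrt (2 * gap s).

Lemma radius_sqr s : graph_distr B s -> radius s ^+ 2 = 2 * gap s.
Proof. by move=> sB; rewrite sqr_sqrtr // mulr_ge0 // gap_ge0. Qed.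

(* |c1 - c2|^2 <= 2 gap s1 + 2 gap s2 = r1^2 + r2^2 <= (r1 + r2)^2 *)
Lemma center_coord_le s1 s2 (i : 'I_d) : graph_distr B s1 -> graph_distr B s2 ->
  center z s1 ord0 i - radius s1 <= center z s2 ord0 i + radius s2.
Proof.
move=> s1B s2B; have := sqr_coord_le_dotpp (center z s1 - center z s2) i.
rewrite coordB => coord_le.
have := center_dist s1B s2B; rewrite mulrDr -(radius_sqr s1B) -(radius_sqr s2B).
have r1_ge0 : 0 <= radius s1 := sqrtr_ge0 _.
have r2_ge0 : 0 <= radius s2 := sqrtr_ge0 _.
nra.
Qed.

Definition coord_lower (i : 'I_d) : set R :=
  [set center z s ord0 i - radius s | s in graph_distr B].

Lemma has_sup_coord_lower i : has_sup (coord_lower i).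
Proof.
split; first by exists (center z (dirac p0 q0) ord0 i - radius (dirac p0 q0)),
  (dirac p0 q0); first exact: graph_distr_dirac.
exists (center z (dirac p0 q0) ord0 i + radius (dirac p0 q0)) => _ [s sB <-].
by apply: center_coord_le => //; exact: graph_distr_dirac.
Qed.

Definition minty_point : vec := \row_i sup (coord_lower i).

Lemma minty_point_near s : graph_distr B s ->
  dotp (minty_point - center z s) (minty_point - center z s) <= 2 * d%:R * gap s.
Proof.
move=> sB; have -> : 2 * d%:R * gap s = \sum_(i < d) 2 * gap s.
  by rewrite sumr_const card_ord -mulr_natr; ring.
apply: ler_sum => i _; rewrite -expr2 coordB.
have lo : center z s ord0 i - radius s <= minty_point ord0 i.
  rewrite [minty_point ord0 i]mxE; apply: sup_upper_bound.
    exact: has_sup_coord_lower.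
  by exists s.
have hi : minty_point ord0 i <= center z s ord0 i + radius s.
  rewrite [minty_point ord0 i]mxE; apply: ge_sup; first by case: (has_sup_coord_lower i).
  by move=> _ [s' s'B <-]; exact: center_coord_le.
have r_ge0 : 0 <= radius s := sqrtr_ge0 _.
rewrite -(radius_sqr sB); nra.
Qed.

Lemma violation_le s a b t : graph_distr B s -> B a b -> 0 < t <= 1 ->
  t * - dotp (z - minty_point - b) (minty_point - a)
  <= (2 * d%:R + 1) * gap s
     + 2 * t ^+ 2 * dotp (minty_point - center z (dirac a b))
                         (minty_point - center z (dirac a b)).
Proof.
move=> sB Bab /andP[t_gt0 t_le1].
have t_range : 0 <= t <= 1 by rewrite ltW.
have := psi_le_sup (graph_distr_mix t_range sB (graph_distr_dirac Bab)).
rewrite psi_mix (psi_dirac _ minty_point).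
have := minty_point_near sB; have := gap_ge0 sB; have := psi_sup_le0.
rewrite /gap; set y := minty_point; set m := center z s.
set mj := center z (dirac a b); set G := - dotp _ _.
have -> : m - mj = (y - mj) - (y - m) by rewrite opprB [RHS]addrC subrKA.
set P := y - m; set Q := y - mj; clearbody G P Q.
move=> S_le0 gap_s_ge0 near mix_le.
have t_psi : t * psi z s <= 0 by rewrite pmulr_rle0 //; lra.
have PP_ge0 : 0 <= (3 * t - 2 * t ^+ 2) * dotp P P by rewrite mulr_ge0 ?dotpp_ge0 //; nra.
have := dotpp_ge0 ((1 - t) *: P - t *: Q).
move: mix_le; dotp_simpl; rewrite (dotpC Q P); lra.
Qed.

Lemma violation_le_sqr a b t : B a b -> 0 < t <= 1 ->
  t * - dotp (z - minty_point - b) (minty_point - a)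
  <= 2 * t ^+ 2 * dotp (minty_point - center z (dirac a b))
                       (minty_point - center z (dirac a b)).
Proof.
move=> Bab t_range; apply/ler_addgt0Pr => e e_gt0.
have const_gt0 : 0 < 2 * d%:R + 1 :> R by rewrite ltr_wpDl // mulr_ge0.
have [s sB gap_lt] := gap_small (divr_gt0 e_gt0 const_gt0).
have := violation_le sB Bab t_range.
by move: gap_lt; rewrite ltr_pdivlMr // mulrC; lra.
Qed.

Lemma minty_point_ok a b : B a b -> 0 <= dotp (z - minty_point - b) (minty_point - a).
Proof.
move=> Bab; rewrite -oppr_le0; apply/ler_addgt0Pr => e e_gt0; rewrite add0r.
have := violation_le_sqr Bab; set G := - dotp _ _; set W := dotp _ _ => viol.
have W_ge0 : 0 <= W := dotpp_ge0 _.
pose t := e / (2 * W + e); have den_gt0 : 0 < 2 * W + e by lra.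
have tE : t * (2 * W + e) = e by rewrite divfK // gt_eqF.
have t_gt0 : 0 < t by rewrite divr_gt0.
have t_le1 : t <= 1 by rewrite ler_pdivrMr // mul1r; lra.
have t_range : 0 < t <= 1 by rewrite t_gt0 t_le1.
have : t * G <= t * (2 * t * W) by have := viol t t_range; lra.
rewrite ler_pM2l // => G_le; have : 0 <= t * e by rewrite mulr_ge0 // ltW.
lra.
Qed.

End MintyPoint.

Theorem maximally_monotone_surjective (R : realType) (d : nat) (B : op R d) :
  maximally_monotone B -> forall z : 'rV[R]_d, exists y, B y (z - y).
Proof.
move=> [Bmono Bmax] z.
have [p0 [q0 Bp0]] : exists p q, B p q.
  apply: NNPP => noB; case: (noB); exists 0, 0.
  apply: (Bmax (fun p q => p = 0 /\ q = 0)) => //.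
  - by move=> _ _ _ _ [-> ->] [-> ->]; rewrite subrr dotp0l.
  - by move=> p q Bpq; case: noB; exists p, q.
have y_ok := minty_point_ok z Bmono Bp0.
set y := minty_point B z in y_ok *; exists y.
apply: (Bmax (fun p q => B p q \/ p = y /\ q = z - y)); last 2 first.
- by move=> a b; left.
- by right.
move=> x1 x2 u1 u2 [Bxu1|[-> ->]] [Bxu2|[-> ->]].
- exact: Bmono.
- by rewrite -[u1 - _]opprB -[x1 - y]opprB dotpNl dotpNr opprK; exact: y_ok.
- exact: y_ok.
- by rewrite !subrr dotp0r.
Qed.

Section CohypomonotoneResolvent.
Variables (R : realType) (d : nat).
Notation vec := 'rV[R]_d.
Implicit Types (A : op R d) (rho c : R).

(* The operator u |-> (A^-1 + rho Id)(u) / c. *)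
Definition cohypo_shift A rho c : op R d := fun u m => A (c *: m - rho *: u) u.

Lemma cohypo_shift_monotone A rho c : 0 < c ->
  cohypomonotone rho A -> monotone_op (cohypo_shift A rho c).
Proof.
move=> c_gt0 Aco u u' m m' Aum Aum'.
have := Aco _ _ _ _ Aum Aum'; dotp_simpl.
rewrite (dotpC m u) (dotpC m' u) (dotpC m u') (dotpC m' u') => co.
by rewrite -(pmulr_rge0 _ c_gt0); dotp_simpl; lra.
Qed.

Lemma cohypo_shift_max A rho c : 0 < c ->
  maximally_cohypomonotone rho A -> maximally_monotone (cohypo_shift A rho c).
Proof.
move=> c_gt0 [Aco Amax]; split=> [|M Mmono AM u m Mum].
  exact: cohypo_shift_monotone.
have c_neq0 : c != 0 by rewrite gt_eqF.
pose A' : op R d := fun y v => M v (c^-1 *: (y + rho *: v)).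
have A'co : cohypomonotone rho A'.
  move=> y y' v v' A'yv A'yv'; have := Mmono _ _ _ _ A'yv A'yv'.
  rewrite -scalerBr dotpZl pmulr_rge0 ?invr_gt0 //.
  by dotp_simpl; rewrite (dotpC y v) (dotpC y' v) (dotpC y v') (dotpC y' v'); lra.
have AA' y v : A y v -> A' y v.
  by move=> Ayv; apply: AM; rewrite /cohypo_shift scalerA divff // scale1r addrK.
have := Amax A' A'co AA' (c *: m - rho *: u) u.
by rewrite /A' subrK scalerA mulVf // scale1r; apply.
Qed.

Variables (A : op R d) (rho eta : R).
Hypotheses (eta_gt0 : 0 < eta) (rho_lt_eta : rho < eta).
Hypothesis Amax : maximally_cohypomonotone rho A.

(* Minty's theorem for the shift with c = eta - rho gives m = x / c - u with
   u in A (x - eta u). *)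
Lemma resolvent_exists x : exists y, resolvent_rel eta A x y.
Proof.
have c_gt0 : 0 < eta - rho by rewrite subr_gt0.
have [u Au] := maximally_monotone_surjective (cohypo_shift_max c_gt0 Amax)
                 ((eta - rho)^-1 *: x).
exists (x - eta *: u), u; split; last by rewrite subrK.
move: Au; rewrite /cohypo_shift scalerBr scalerA divff ?gt_eqF // scale1r.
by rewrite -addrA -opprD -scalerDl subrK.
Qed.

Lemma resolventP x : resolvent_rel eta A x (resolvent eta A x).
Proof. by rewrite /resolvent; apply: epsilon_spec; exact: resolvent_exists. Qed.

Definition residual (x : vec) : vec := x - resolvent eta A x.

Lemma residualP x : exists2 u, A (resolvent eta A x) u & residual x = eta *: u.
Proof.
have [u [Au xE]] := resolventP x; exists u => //.
by rewrite /residual {1}xE addrAC subrr add0r.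
Qed.

Lemma residual_cocoercive x x' :
  (1 - rho / eta) * dotp (residual x - residual x') (residual x - residual x')
  <= dotp (residual x - residual x') (x - x').
Proof.
have [u Au Ru] := residualP x; have [u' Au' Ru'] := residualP x'.
have co := (proj1 Amax) _ _ _ _ Au Au'.
have -> : x - x' = (resolvent eta A x - resolvent eta A x') + (residual x - residual x').
  rewrite /residual; move: (resolvent eta A x) (resolvent eta A x') => J J'.
  by apply/rowP => i; rewrite !mxE; ring.
rewrite Ru Ru' -scalerBr; move: co.
set J := resolvent eta A x - _; set v := u - u'; clearbody J v; dotp_simpl => co.
have -> : (1 - rho / eta) * (eta * (eta * dotp v v)) = eta * ((eta - rho) * dotp v v).
  by field; rewrite gt_eqF.
by rewrite -mulrDr ler_pM2l //; lra.
Qed.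

Lemma residual_eq0 xs : A xs 0 -> residual xs = 0.
Proof.
move=> Axs; have [u Au Ru] := residualP xs; have co := (proj1 Amax) _ _ _ _ Au Axs.
have JE : resolvent eta A xs - xs = - (eta *: u) by rewrite -Ru opprB.
move: co; rewrite subr0 JE; dotp_simpl => co.
have /dotpp_eq0 u0 : dotp u u = 0.
  apply/eqP; rewrite eq_le dotpp_ge0 andbT.
  have c_gt0 : 0 < eta - rho by rewrite subr_gt0.
  by rewrite -(pmulr_rle0 _ c_gt0); lra.
by rewrite Ru u0 scaler0.
Qed.

End CohypomonotoneResolvent.

Section Halpern.
Variables (R : realType) (d : nat).
Notation vec := 'rV[R]_d.
Variables (S : vec -> vec) (xstar x0 : vec) (x e : nat -> vec).
Hypothesis S_firm : forall y y',
  dotp (S y - S y') (S y - S y') <= dotp (S y - S y') (y - y').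
Hypotheses (S_xstar : S xstar = 0) (x_0 : x 0%N = x0).
Hypothesis x_S : forall k,
  (k%:R + 2) *: x k.+1 = x0 + (k%:R + 1) *: (x k - S (x k) + e k).

Definition halpern_potential k : R :=
  k%:R * (k%:R + 1) / 2 * dotp (S (x k)) (S (x k))
  + (k%:R + 1) * dotp (S (x k)) (x k - x0).

Definition halpern_error k : R :=
  (k%:R + 1) * (k%:R + 2) / 2 * dotp (e k) (e k) + (k%:R + 1) * dotp (S (x k)) (e k).

Lemma S_firm_xstar y : dotp (S y) (S y) <= dotp (S y) (y - xstar).
Proof. by have := S_firm y xstar; rewrite S_xstar subr0. Qed.

Lemma halpern_potential_step k :
  halpern_potential k.+1 <= halpern_potential k + halpern_error k.
Proof.
rewrite /halpern_potential /halpern_error -natr1.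
set n := k%:R + 1; have n_ge0 : 0 <= n by rewrite addr_ge0.
have x_S' : (n + 1) *: x k.+1 = x0 + n *: (x k - S (x k) + e k).
  by rewrite -x_S /n -addrA.
set s := S (x k); set s' := S (x k.+1); set x' := x k.+1; set ek := e k.
have firm := S_firm x' (x k); rewrite -/s -/s' in firm x_S'.
have I1 : (n + 1) * dotp s' (x' - x0) = n * dotp s' (x k - x0 - s + ek).
  rewrite -!dotpZr scalerBr x_S'; congr (dotp _ _).
  by apply/rowP => i; rewrite !mxE; ring.
have I2 : (n + 1) * dotp (s' - s) (x' - x k)
          = dotp (s' - s) (x0 - x k - n *: s + n *: ek).
  rewrite -dotpZr scalerBr x_S'; congr (dotp _ _).
  by apply/rowP => i; rewrite !mxE; ring.
have firm_n : n * (n + 1) * dotp (s' - s) (s' - s)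
              <= n * dotp (s' - s) (x0 - x k - n *: s + n *: ek).
  by rewrite -I2 -mulrA ler_wpM2l // ler_wpM2l ?addr_ge0.
have sq : 0 <= n * (n + 1) / 2 * dotp (s' - s - ek) (s' - s - ek).
  by rewrite mulr_ge0 ?dotpp_ge0 ?divr_ge0 ?mulr_ge0 ?addr_ge0.
have -> : k%:R = n - 1 by rewrite /n addrK.
rewrite -/s -/s' -/x' -/ek I1; move: firm_n sq; dotp_simpl.
rewrite (dotpC s' s) (dotpC ek s) (dotpC ek s').
lra.
Qed.

Lemma halpern_potential_le K : halpern_potential K <= \sum_(k < K) halpern_error k.
Proof.
elim: K => [|K IH].
  by rewrite /halpern_potential x_0 subrr dotp0r big_ord0 !mulr0 mul0r !mul0r addr0.
by rewrite big_ord_recr /=; have := halpern_potential_step K; lra.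
Qed.

(* Uses K/4 |s|^2 - |s| D + D^2 / K = (K |s| / 2 - D)^2 / K >= 0. *)
Lemma halpern_potential_ge K : (1 <= K)%N ->
  K%:R * (K%:R + 1) / 4 * dotp (S (x K)) (S (x K))
    - (K%:R + 1) / K%:R * enorm (xstar - x0) ^+ 2
  <= halpern_potential K.
Proof.
move=> K_ge1; have K_gt0 : 0 < K%:R :> R by rewrite ltr0n.
rewrite /halpern_potential.
have -> : x K - x0 = (x K - xstar) + (xstar - x0) by rewrite addrA subrK.
rewrite dotpDr.
have firm := S_firm_xstar (x K).
have cs := cauchy_schwarz (- S (x K)) (xstar - x0); rewrite dotpNl enormN in cs.
move: firm cs; rewrite -enorm_sqr; set N := enorm _; set D := enorm _.
set P := dotp _ (x K - xstar); set Q := dotp _ (xstar - x0) => firm cs.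
rewrite -(ler_pM2l K_gt0).
have -> : K%:R * (K%:R * (K%:R + 1) / 4 * N ^+ 2 - (K%:R + 1) / K%:R * D ^+ 2)
        = K%:R ^+ 2 * (K%:R + 1) / 4 * N ^+ 2 - (K%:R + 1) * D ^+ 2.
  by field; rewrite gt_eqF.
have KK1_ge0 : 0 <= K%:R * (K%:R + 1) :> R by rewrite mulr_ge0 ?addr_ge0.
have := ler_wpM2l KK1_ge0 firm; have := ler_wpM2l KK1_ge0 cs.
have := mulr_ge0 (ltW (addr_gt0 K_gt0 ltr01)) (sqr_ge0 (K%:R * N / 2 - D)).
have := mulr_ge0 KK1_ge0 (sqr_ge0 N).
lra.
Qed.

Lemma halpern_residual_le K : (1 <= K)%N ->
  K%:R * (K%:R + 1) / 4 * dotp (S (x K)) (S (x K))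
    - (K%:R + 1) / K%:R * enorm (xstar - x0) ^+ 2
  <= \sum_(k < K) halpern_error k.
Proof.
by move=> K_ge1; apply: le_trans (halpern_potential_ge K_ge1) (halpern_potential_le K).
Qed.

Lemma enorm_firm_xstar y : enorm (y - S y - xstar) <= enorm (y - xstar).
Proof.
apply: ler_enorm; rewrite addrAC; have := S_firm_xstar y.
set u := y - xstar; set s := S y; clearbody u s; dotp_simpl; rewrite (dotpC u s).
have := dotpp_ge0 s; lra.
Qed.

Lemma halpern_dist_le k :
  (k%:R + 1) * enorm (x k - xstar)
  <= (k%:R + 1) * enorm (x0 - xstar) + \sum_(i < k) (i%:R + 1) * enorm (e i).
Proof.
elim: k => [|k IH]; first by rewrite big_ord0 addr0 x_0.
rewrite big_ord_recr /= -natr1.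
have k1_gt0 : 0 < k%:R + 1 :> R by rewrite ltr_wpDl.
have step : (k%:R + 1 + 1) *: (x k.+1 - xstar)
            = (x0 - xstar) + (k%:R + 1) *: ((x k - S (x k) - xstar) + e k).
  rewrite scalerBr -addrA x_S; apply/rowP => i; rewrite !mxE; ring.
have := ler_enormD (x0 - xstar) ((k%:R + 1) *: (x k - S (x k) - xstar + e k)).
rewrite -step !enormZ !ger0_norm ?(ltW k1_gt0) ?addr_ge0 ?(ltW k1_gt0) //.
have := ler_wpM2l (ltW k1_gt0) (ler_enormD (x k - S (x k) - xstar) (e k)).
have := ler_wpM2l (ltW k1_gt0) (enorm_firm_xstar (x k)).
lra.
Qed.

End Halpern.

Section InexactHalpern.
Variables (R : realType) (d : nat).
Notation vec := 'rV[R]_d.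
Variables (A : op R d) (rho eta : R) (xstar x0 : vec) (x Jt : nat -> vec).
Variable eps : nat -> R.
Hypotheses (eta_gt0 : 0 < eta) (rho_lt_eta : rho < eta).
Hypotheses (Amax : maximally_cohypomonotone rho A) (Axstar : A xstar 0).
Hypothesis x_0 : x 0%N = x0.
Hypothesis Jt_near : forall k, enorm (resolvent eta A (x k) - Jt k) <= eps k.
Hypothesis x_S : forall k,
  x k.+1 = (k.+2%:R)^-1 *: x0
           + (1 - (k.+2%:R)^-1) *: ((1 - (1 - rho / eta)) *: x k + (1 - rho / eta) *: Jt k).

Let alpha := 1 - rho / eta.
Let S y := alpha *: residual A eta y.
Let err k := alpha *: (Jt k - resolvent eta A (x k)).

Let alpha_gt0 : 0 < alpha.
Proof. by rewrite subr_gt0 ltr_pdivrMr // mul1r. Qed.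

Let S_firm y y' : dotp (S y - S y') (S y - S y') <= dotp (S y - S y') (y - y').
Proof.
by rewrite -!scalerBr !dotpZl dotpZr ler_pM2l //; exact: residual_cocoercive.
Qed.

Let S_xstar : S xstar = 0.
Proof. by rewrite /S (residual_eq0 rho_lt_eta Amax Axstar) scaler0. Qed.

Let x_S' k : (k%:R + 2) *: x k.+1 = x0 + (k%:R + 1) *: (x k - S (x k) + err k).
Proof.
have k2 : k.+2%:R = k%:R + 2 :> R by rewrite -!natr1; lra.
have k2_neq0 : k%:R + 2 != 0 :> R by rewrite -k2 pnatr_eq0.
rewrite x_S k2 /S /err /residual -/alpha.
move: (resolvent eta A (x k)) => J; apply/rowP => i; rewrite !mxE.
by field.
Qed.

Let err_dist k : enorm (Jt k - resolvent eta A (x k)) <= eps k.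
Proof. by rewrite -enormN opprB. Qed.

Lemma inexact_halpern_residual_le K : (1 <= K)%N ->
  K%:R * (K%:R + 1) / 4 * enorm (residual A eta (x K)) ^+ 2
    - (K%:R + 1) / (K%:R * alpha ^+ 2) * enorm (xstar - x0) ^+ 2
  <= \sum_(k < K) ((k%:R + 1) * (k%:R + 2) * eps k ^+ 2 / 2
                   + (k%:R + 1) * enorm (residual A eta (x k)) * eps k).
Proof.
move=> K_ge1; have K_gt0 : 0 < K%:R :> R by rewrite ltr0n.
have := halpern_residual_le S_firm S_xstar x_0 x_S' K_ge1.
have err_le : \sum_(k < K) halpern_error S x err k
  <= alpha ^+ 2 * \sum_(k < K) ((k%:R + 1) * (k%:R + 2) * eps k ^+ 2 / 2
                   + (k%:R + 1) * enorm (residual A eta (x k)) * eps k).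
  rewrite mulr_sumr; apply: ler_sum => k _.
  rewrite /halpern_error /S /err !dotpZl !dotpZr.
  set dl := Jt k - _; set r := residual A eta (x k).
  have k1_ge0 : 0 <= k%:R + 1 :> R by rewrite addr_ge0.
  have dd : dotp dl dl <= eps k ^+ 2.
    by rewrite -enorm_sqr; have := enorm_ge0 dl; have := err_dist k; nra.
  have rd : dotp r dl <= enorm r * eps k.
    exact: le_trans (cauchy_schwarz r dl) (ler_wpM2l (enorm_ge0 r) (err_dist k)).
  have := ler_wpM2l (mulr_ge0 (sqr_ge0 alpha) k1_ge0) rd.
  have := ler_wpM2l (mulr_ge0 (sqr_ge0 alpha)
            (mulr_ge0 k1_ge0 (addr_ge0 (ler0n R k) (ler0n R 2)))) dd.
  lra.
have -> : dotp (S (x K)) (S (x K)) = alpha ^+ 2 * enorm (residual A eta (x K)) ^+ 2.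
  by rewrite /S dotpZl dotpZr enorm_sqr mulrA expr2.
move: err_le; set N := enorm (residual _ _ _); set D := enorm (xstar - x0).
set T := \sum_(k < K) _ => err_le bound.
have a2_gt0 : 0 < alpha ^+ 2 by rewrite exprn_gt0.
rewrite -(ler_pM2l a2_gt0).
have -> : alpha ^+ 2 * (K%:R * (K%:R + 1) / 4 * N ^+ 2
                        - (K%:R + 1) / (K%:R * alpha ^+ 2) * D ^+ 2)
          = K%:R * (K%:R + 1) / 4 * (alpha ^+ 2 * N ^+ 2) - (K%:R + 1) / K%:R * D ^+ 2.
  by field; rewrite !gt_eqF.
lra.
Qed.

Lemma inexact_halpern_dist_le k :
  enorm (x k - xstar)
  <= enorm (x0 - xstar) + alpha / (k%:R + 1) * \sum_(i < k) (i%:R + 1) * eps i.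
Proof.
have k1_gt0 : 0 < k%:R + 1 :> R by rewrite ltr_wpDl.
rewrite -(ler_pM2l k1_gt0) mulrDr.
have -> : (k%:R + 1) * (alpha / (k%:R + 1) * \sum_(i < k) (i%:R + 1) * eps i)
          = alpha * \sum_(i < k) (i%:R + 1) * eps i by field; rewrite gt_eqF.
apply: le_trans (halpern_dist_le S_firm S_xstar x_0 x_S' k) _.
rewrite lerD2l mulr_sumr; apply: ler_sum => i _.
rewrite /err enormZ ger0_norm ?(ltW alpha_gt0) // mulrCA.
by rewrite ler_pM2l // ler_pM2l ?ltr_wpDl // err_dist.
Qed.

End InexactHalpern.

Unset Implicit Arguments. Set Strict Implicit.

Theorem lemma2p5 (R : realType) (d : nat)
  (F : 'rV[R]_d -> 'rV[R]_d) (G : op R d) (L rho eta : R)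
  (x0 xstar : 'rV[R]_d) (x Jt : nat -> 'rV[R]_d) (eps : nat -> R) :
  lipschitz L F ->
  maximally_monotone G ->
  op_add F G xstar 0 ->
  0 < rho ->
  maximally_cohypomonotone rho (op_add F G) ->
  rho < eta ->
  x 0%N = x0 ->
  (forall k : nat, 0 < eps k) ->
  (forall k : nat,
     enorm (resolvent eta (op_add F G) (x k) - Jt k) <= eps k) ->
  (forall k : nat,
     x k.+1 = (k.+2%:R)^-1 *: x0
              + (1 - (k.+2%:R)^-1) *:
                  ((1 - (1 - rho / eta)) *: x k + (1 - rho / eta) *: Jt k)) ->
  let alpha := 1 - rho / eta in
  let Res := fun y => y - resolvent eta (op_add F G) y in
  (forall K : nat, (1 <= K)%N ->
     (K%:R * (K%:R + 1) / 4) * enorm (Res (x K)) ^+ 2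
       - (K%:R + 1) / (K%:R * alpha ^+ 2) * enorm (xstar - x0) ^+ 2
     <= \sum_(k < K)
          ((k%:R + 1) * (k%:R + 2) * eps k ^+ 2 / 2
           + (k%:R + 1) * enorm (Res (x k)) * eps k))
  /\
  (forall k : nat,
     enorm (x k - xstar)
     <= enorm (x0 - xstar)
        + alpha / (k%:R + 1) * \sum_(i < k) (i%:R + 1) * eps i).
Proof.
move=> _ _ Axstar rho_gt0 Amax rho_lt_eta x_0 _ Jt_near x_S alpha Res.
have eta_gt0 : 0 < eta := lt_trans rho_gt0 rho_lt_eta.
split=> [K|k].
- exact: inexact_halpern_residual_le eta_gt0 rho_lt_eta Amax Axstar x_0 Jt_near x_S K.
- exact: inexact_halpern_dist_le eta_gt0 rho_lt_eta Amax Axstar x_0 Jt_near x_S k.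
Qed.
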